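(* Let $M$ be an entrywise nonnegative $m\times n$ real matrix and let $M=AW$ with $A\in\mathbb{R}_{\ge0}^{m\times r}$ and $W\in\mathbb{R}_{\ge0}^{r\times n}$. Then there exist $\tilde A\in\mathbb{R}_{\ge0}^{m\times r}$ and $\tilde W\in\mathbb{R}_{\ge0}^{r\times n}$ with $M=\tilde A\tilde W$ such that the factorization $M=\tilde A\tilde W$ is stable.
   Context: Notation: $M_i$ denotes the $i$-th column and $M^j$ the $j$-th row of a matrix $M$; for a set $S$ of column indices, $A_S$ is the submatrix of columns of $A$ indexed by $S$, and for a set $T$ of row indices $W^T$ is the submatrix of rows indexed by $T$. For a matrix $A$ with columns $A_1,\dots,A_r$, let $\mathrm{aff}(A)=\{\sum_i\alpha_iA_i:\alpha_i\ge0\ \forall i\}$ (the set of nonnegative combinations of the columns). Given $A$ ($m\times r$) and $v\in\mathbb{R}^m$, a subset $S\subseteq[r]$ of columns of $A$ is admissible for $v$ if $v\in\mathrm{aff}(A_S)$; analogously, a subset $T\subseteq[r]$ of rows of $W$ is admissible for a row vector $u\in\mathbb{R}^{1\times n}$ if $u$ is a nonnegative combination of the rows of $W^T$. Lexicographic ordering on subsets of $[r]$: if $|S|<|T|$ then $S$ precedes $T$; subsets of equal size are compared by the standard lexicographic order. The support of a vector is the set of indices of its nonzero entries. A factorization $M=AW$ (with $A,W$ nonnegative, inner dimension $r$) is stable if, letting $S_i$ be the lexicographically first subset of columns of $A$ admissible for $M_i$ and $T_j$ the lexicographically first subset of rows of $W$ admissible for $M^j$: (1) for each $i$, $W_i$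 is supported in $S_i$, and (2) for each $j$, the row $A^j$ is supported in $T_j$. *)

From mathcomp Require Import all_boot all_order all_algebra.
From mathcomp Require Import reals.
Set Implicit Arguments. Unset Strict Implicit. Unset Printing Implicit Defensive.
Import Order.TTheory GRing.Theory Num.Theory.
Local Open Scope ring_scope.

Fixpoint lex_leq (s t : seq nat) : bool :=
  match s, t with
  | [::], _ => true
  | _ :: _, [::] => false
  | x :: s', y :: t' => (x < y)%N || ((x == y) && lex_leq s' t')
  end.

Definition sorted_elems (r : nat) (S : {set 'I_r}) : seq nat :=
  sort leq [seq nat_of_ord i | i <- enum S].

Definition set_lex_le (r : nat) (S T : {set 'I_r}) : bool :=
  (#|S| < #|T|)%N || ((#|S| == #|T|) && lex_leq (sorted_elems S) (sorted_elems T)).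

Definition nonneg_mx (R : realType) (p q : nat) (X : 'M[R]_(p, q)) : Prop :=
  forall i j, 0 <= X i j.

Definition col_admissible (R : realType) (m r : nat) (A : 'M[R]_(m, r))
    (v : 'cV[R]_m) (S : {set 'I_r}) : Prop :=
  exists alpha : 'I_r -> R, (forall k, 0 <= alpha k) /\
    v = \sum_(k in S) alpha k *: col k A.

Definition row_admissible (R : realType) (r n : nat) (W : 'M[R]_(r, n))
    (u : 'rV[R]_n) (T : {set 'I_r}) : Prop :=
  exists beta : 'I_r -> R, (forall k, 0 <= beta k) /\
    u = \sum_(k in T) beta k *: row k W.

Definition lexfirst_col (R : realType) (m r : nat) (A : 'M[R]_(m, r))
    (v : 'cV[R]_m) (S : {set 'I_r}) : Prop :=
  col_admissible A v S /\ forall S', col_admissible A v S' -> set_lex_le S S'.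

Definition lexfirst_row (R : realType) (r n : nat) (W : 'M[R]_(r, n))
    (u : 'rV[R]_n) (T : {set 'I_r}) : Prop :=
  row_admissible W u T /\ forall T', row_admissible W u T' -> set_lex_le T T'.

Definition stable_factorization (R : realType) (m n r : nat)
    (M : 'M[R]_(m, n)) (A : 'M[R]_(m, r)) (W : 'M[R]_(r, n)) : Prop :=
  (forall (i : 'I_n) (S : {set 'I_r}), lexfirst_col A (col i M) S ->
     forall k, W k i != 0 -> k \in S) /\
  (forall (j : 'I_m) (T : {set 'I_r}), lexfirst_row W (row j M) T ->
     forall k, A j k != 0 -> k \in T).

(* Measure a factorization by the positions, in the lexicographic order of
   subsets, of the supports of the columns of W and of the rows of A. If stability
   fails at column i of W, replacing that column by the coefficients of the
   lexicographically first admissible set S keeps M = A W and moves the support of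
   the column to a subset of S, which lies strictly before the old support (the
   old support is admissible and contains an index outside S). Rows of A are
   handled by transposition. The measure is a natural number, so the repair
   process terminates in a stable factorization. *)

From mathcomp Require Import all_boot all_order all_algebra.
From mathcomp Require Import reals.
From Stdlib Require Import Classical.
Set Implicit Arguments. Unset Strict Implicit. Unset Printing Implicit Defensive.
Import GRing.Theory.
Local Open Scope ring_scope.

Lemma lex_leq_refl s : lex_leq s s.
Proof. by elim: s => //= x s ->; rewrite eqxx orbT. Qed.

Lemma lex_leq_trans s t u : lex_leq s t -> lex_leq t u -> lex_leq s u.
Proof.
elim: s t u => [|x s IH] [|y t] [|z u] //=.
move=> /orP[lt_xy|/andP[/eqP <- le_st]] /orP[lt_yz|/andP[/eqP <- le_tu]].
- by rewrite (ltn_trans lt_xy lt_yz).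
- by rewrite lt_xy.
- by rewrite lt_yz.
- by rewrite eqxx (IH _ _ le_st le_tu) orbT.
Qed.

Lemma lex_leq_anti s t : lex_leq s t -> lex_leq t s -> s = t.
Proof.
elim: s t => [|x s IH] [|y t] //=.
move=> /orP[lt_xy|/andP[/eqP-> le_st]] /orP[lt_yx|/andP[/eqP eyx le_ts]].
- by have := ltn_trans lt_xy lt_yx; rewrite ltnn.
- by move: lt_xy; rewrite eyx ltnn.
- by move: lt_yx; rewrite ltnn.
- by rewrite (IH _ le_st le_ts).
Qed.

Section SetLex.
Variable r : nat.
Implicit Types S T U : {set 'I_r}.

Lemma set_lex_le_refl S : set_lex_le S S.
Proof. by rewrite /set_lex_le eqxx lex_leq_refl orbT. Qed.

Lemma set_lex_le_trans S T U : set_lex_le S T -> set_lex_le T U -> set_lex_le S U.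
Proof.
rewrite /set_lex_le.
move=> /orP[lt_ST|/andP[/eqP-> le_ST]] /orP[lt_TU|/andP[/eqP<- le_TU]].
- by rewrite (ltn_trans lt_ST lt_TU).
- by rewrite lt_ST.
- by rewrite lt_TU.
- by rewrite eqxx (lex_leq_trans le_ST le_TU) orbT.
Qed.

Lemma set_lex_le_anti S T : set_lex_le S T -> set_lex_le T S -> S = T.
Proof.
rewrite /set_lex_le.
move=> /orP[lt_ST|/andP[/eqP eST le_ST]] /orP[lt_TS|/andP[/eqP eTS le_TS]].
- by have := ltn_trans lt_ST lt_TS; rewrite ltnn.
- by move: lt_ST; rewrite eTS ltnn.
- by move: lt_TS; rewrite eST ltnn.
have eq_elems := lex_leq_anti le_ST le_TS.
apply/setP => x.
have : (val x \in sorted_elems S) = (val x \in sorted_elems T) by rewrite eq_elems.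
by rewrite /sorted_elems !mem_sort !(mem_map val_inj) !mem_enum.
Qed.

Lemma subset_set_lex_le S T : S \subset T -> set_lex_le S T.
Proof.
move=> sST; rewrite /set_lex_le ltn_neqAle subset_leq_card // andbT.
case: eqP => [eq_card|]; last by [].
have /eqP-> : S == T by rewrite eqEcard sST eq_card /=.
by rewrite lex_leq_refl.
Qed.

Definition lex_rank S : nat := #|[set T | set_lex_le T S]|.

Lemma lex_rank_lt S T : set_lex_le S T -> S != T -> (lex_rank S < lex_rank T)%N.
Proof.
move=> le_ST neq_ST; apply: proper_card; apply/properP; split.
  by apply/subsetP => U; rewrite !inE => le_US; apply: set_lex_le_trans le_ST.
exists T; rewrite !inE ?set_lex_le_refl //.
by apply: contra neq_ST => le_TS; rewrite (set_lex_le_anti le_ST le_TS).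
Qed.

End SetLex.

Lemma ltn_sum_eq_except k (F G : 'I_k -> nat) i :
  (forall l, l != i -> F l = G l) -> (F i < G i)%N -> (\sum_l F l < \sum_l G l)%N.
Proof.
move=> eqFG lt_i; rewrite (bigD1 i) //= [X in (_ < X)%N](bigD1 i) //=.
by rewrite (eq_bigr G) ?ltn_add2r // => l /eqFG.
Qed.

Section Factorization.
Variable R : realType.

Definition col_supp p q (W : 'M[R]_(p, q)) i : {set 'I_p} := [set k | W k i != 0].

Definition supp_rank p q (W : 'M[R]_(p, q)) : nat := \sum_i lex_rank (col_supp W i).

Definition potential m n r (A : 'M[R]_(m, r)) (W : 'M[R]_(r, n)) : nat :=
  (supp_rank W + supp_rank A^T)%N.

Lemma nonneg_mx_tr p q (X : 'M[R]_(p, q)) : nonneg_mx X -> nonneg_mx X^T.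
Proof. by move=> nnX i j; rewrite mxE. Qed.

Lemma col_mulmx m n r (A : 'M[R]_(m, r)) (W : 'M[R]_(r, n)) i :
  col i (A *m W) = \sum_k W k i *: col k A.
Proof.
apply/matrixP => a b; rewrite !mxE summxE; apply: eq_bigr => k _.
by rewrite !mxE mulrC.
Qed.

Lemma col_admissible_supp m n r (A : 'M[R]_(m, r)) (W : 'M[R]_(r, n)) i :
  nonneg_mx W -> col_admissible A (col i (A *m W)) (col_supp W i).
Proof.
move=> nnW; exists (fun k => W k i); split=> [k|]; first exact: nnW.
rewrite col_mulmx [RHS]big_mkcond /=; apply: eq_bigr => k _.
by rewrite inE; case: eqP => [->|]; rewrite ?scale0r.
Qed.

Lemma row_admissible_tr r n (W : 'M[R]_(r, n)) u T :
  row_admissible W u T <-> col_admissible W^T u^T T.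
Proof.
have sum_tr (beta : 'I_r -> R) :
    (\sum_(k in T) beta k *: row k W)^T = \sum_(k in T) beta k *: col k W^T.
  by rewrite linear_sum; apply: eq_bigr => k _; rewrite linearZ /= tr_row.
split=> [[beta [beta_ge0 ->]]|[beta [beta_ge0 eq_u]]]; exists beta; split=> //.
by apply: trmx_inj; rewrite eq_u sum_tr.
Qed.

Lemma lexfirst_row_tr r n (W : 'M[R]_(r, n)) u T :
  lexfirst_row W u T <-> lexfirst_col W^T u^T T.
Proof.
split=> [[adm_T first_T]|[adm_T first_T]]; split.
- exact/row_admissible_tr.
- by move=> T' /row_admissible_tr; apply: first_T.
- exact/row_admissible_tr.
- by move=> T' /row_admissible_tr; apply: first_T.
Qed.

Lemma improve_col m n r (A : 'M[R]_(m, r)) (W : 'M[R]_(r, n)) i S k :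
  nonneg_mx W -> lexfirst_col A (col i (A *m W)) S -> W k i != 0 -> k \notin S ->
  exists W' : 'M[R]_(r, n),
    [/\ nonneg_mx W', A *m W' = A *m W & (supp_rank W' < supp_rank W)%N].
Proof.
move=> nnW [[alpha [alpha_ge0 eq_col]] first_S] Wki_neq0 kNS.
pose W' := \matrix_(a, l) if l == i then (if a \in S then alpha a else 0) else W a l.
have supp_W'_sub : col_supp W' i \subset S.
  by apply/subsetP => a; rewrite inE mxE eqxx; case: (a \in S); rewrite ?eqxx.
exists W'; split.
- by move=> a l; rewrite mxE; case: ifP => _; [case: ifP|].
- apply/matrixP => a l; rewrite !mxE; case: (eqVneq l i) => [->|neq_li]; last first.
    by apply: eq_bigr => b _; rewrite mxE (negbTE neq_li).
  have := congr1 (fun v : 'cV[R]_m => v a 0) eq_col; rewrite !mxE summxE => ->.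
  rewrite [RHS]big_mkcond; apply: eq_bigr => b _; rewrite !mxE eqxx.
  by case: ifP => _; rewrite ?mulr0 // mulrC.
- apply: (ltn_sum_eq_except (F := fun l => lex_rank (col_supp W' l))) => [l neq_li|].
    by congr lex_rank; apply/setP => b; rewrite !inE mxE (negbTE neq_li).
  apply: lex_rank_lt.
    exact: set_lex_le_trans (subset_set_lex_le supp_W'_sub)
                            (first_S _ (col_admissible_supp A i nnW)).
  apply: contraNneq kNS => eq_supp; apply: (subsetP supp_W'_sub).
  by rewrite eq_supp inE.
Qed.

Lemma improve_row m n r (A : 'M[R]_(m, r)) (W : 'M[R]_(r, n)) j T k :
  nonneg_mx A -> lexfirst_row W (row j (A *m W)) T -> A j k != 0 -> k \notin T ->
  exists A' : 'M[R]_(m, r),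
    [/\ nonneg_mx A', A' *m W = A *m W & (supp_rank A'^T < supp_rank A^T)%N].
Proof.
move=> nnA /lexfirst_row_tr; rewrite tr_row trmx_mul => first_T Ajk_neq0 kNT.
have Ajk_tr_neq0 : A^T k j != 0 by rewrite mxE.
have [A' [nnA' eq_prod lt_rank]] := improve_col (nonneg_mx_tr nnA) first_T Ajk_tr_neq0 kNT.
exists A'^T; rewrite trmxK; split=> //; first exact: nonneg_mx_tr.
by apply: trmx_inj; rewrite trmx_mul trmxK eq_prod trmx_mul.
Qed.

Lemma stable_or_improve m n r (A : 'M[R]_(m, r)) (W : 'M[R]_(r, n)) :
  nonneg_mx A -> nonneg_mx W ->
  stable_factorization (A *m W) A W \/
  exists (A' : 'M[R]_(m, r)) (W' : 'M[R]_(r, n)),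
    [/\ nonneg_mx A', nonneg_mx W', A' *m W' = A *m W &
        (potential A' W' < potential A W)%N].
Proof.
move=> nnA nnW.
case: (classic (exists (A' : 'M[R]_(m, r)) (W' : 'M[R]_(r, n)),
    [/\ nonneg_mx A', nonneg_mx W', A' *m W' = A *m W &
        (potential A' W' < potential A W)%N])) => [|no_improve].
  by right.
left; split=> [i S first_S k Wki_neq0 | j T first_T k Ajk_neq0];
  apply: contraT => kN; case: no_improve.
- have [W' [nnW' eq_prod lt_rank]] := improve_col nnW first_S Wki_neq0 kN.
  by exists A, W'; rewrite /potential ltn_add2r.
- have [A' [nnA' eq_prod lt_rank]] := improve_row nnA first_T Ajk_neq0 kN.
  by exists A', W; rewrite /potential ltn_add2l.
Qed.

End Factorization.

Theorem mainTheorem3 (R : realType) (m n r : nat)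
    (M : 'M[R]_(m, n)) (A : 'M[R]_(m, r)) (W : 'M[R]_(r, n)) :
  nonneg_mx M -> nonneg_mx A -> nonneg_mx W -> M = A *m W ->
  exists (At : 'M[R]_(m, r)) (Wt : 'M[R]_(r, n)),
    [/\ nonneg_mx At, nonneg_mx Wt, M = At *m Wt &
        stable_factorization M At Wt].
Proof.
move=> _ nnA nnW ->; have [N] := ubnP (potential A W).
elim: N A W nnA nnW => // N IH A W nnA nnW lt_pot.
case: (stable_or_improve nnA nnW) => [stable_AW|[A' [W' [nnA' nnW' <- lt_pot']]]].
  by exists A, W.
by apply: IH => //; apply: leq_trans lt_pot' _.
Qed.
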